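(* Let $R$ be a unital commutative Hausdorff topological ring with dense group of units, $E,F\in\mathrm{TopSMod}_R$, $\mathcal U\subset\underline E$ an open subfunctor and $f:\mathcal U\Rightarrow\underline F$ a natural transformation of functors $\Lambda\to\mathrm{Top}$ such that each $f_\lambda$, $\lambda\in\Lambda$, is $\mathcal C^1$ over $R$. Then for every $\lambda\in\Lambda$, every $x\in\mathcal U(\lambda)$, every $p$ with $\theta_p\in\lambda$ and every $y\in\underline E(\lambda\theta_p)$, $$f_\lambda(x+y)=f_\lambda(x)+df_\lambda(x)y.$$ If $R$, $E$ and $F$ are locally $k_\omega$, it suffices to assume that $f_\infty$ is $\mathcal C^1$ over $R$, and the conclusion then holds for all $\lambda\in\Lambda^\infty$ (with $f_{\lambda^\infty}=f_\infty$).
   Context: $\lambda^n=R[\theta_1,\dots,\theta_n]$, $\lambda^\infty=R[\theta_i:i\in\mathbb N]$ Grassmann algebras on odd generators ($\lambda^n=\bigoplus_I R\theta_I$ product topology; $\lambda^\infty$ direct limit topology). $\Lambda$ (resp. $\Lambda^\infty$): category of the $\lambda^n$, $n<\infty$ (resp. also $\lambda^\infty$), morphisms even unital $R$-algebra morphisms; $\varepsilon:\lambda\to R$ kills all $\theta_i$. For a Hausdorff graded topological $R$-module $E=E_0\oplus E_1$ ($E\in\mathrm{TopSMod}_R$): $E\otimes\lambda^N=\prod_{|I|\le N}E\theta_I$ (product topology), $E\otimes\lambda^\infty=\varinjlim E\otimes\lambda^N$ in Top, $\underline E(\lambda)=(E\otimes\lambda)_0$ with functoriality $\mathrm{id}\otimes\varphi$,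 and $\underline E(\lambda\theta_p)=(E\otimes\lambda\theta_p)_0\subset\underline E(\lambda)$. $\underline E(\lambda)$ is a topological $R$-module for $\lambda\in\Lambda$, and also for $\lambda^\infty$ when $R,E$ are locally $k_\omega$ (Hausdorff with every point having an open neighbourhood that is the topological direct limit of an increasing sequence of compact subsets). An open subfunctor $\mathcal U\subset\underline E$ has all $\mathcal U(\lambda)$ open and satisfies $\mathcal U(\lambda)=\underline E(\varepsilon)^{-1}(\mathcal U(R))$; this formula defines $\mathcal U(\lambda^\infty)$, and $f_\infty:\mathcal U(\lambda^\infty)\to\underline F(\lambda^\infty)$ is defined by $f_\infty|_{\mathcal U(\lambda^n)}=f_{\lambda^n}$. $\mathcal C^1$ over $R$ (Bertram–Glöckner–Neeb): a continuous $g:V\to Y$ ($V$ open in a Hausdorff topological $R$-module) is $\mathcal C^1$ if there is a continuous $g^{[1]}$ on $\{(x,v,t):x,x+tv\in V,t\in R\}$ with $g(x+tv)-g(x)=t\,g^{[1]}(x,v,t)$; then $dg(x)v=g^{[1]}(x,v,0)$. *)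

From HB Require Import structures.
From mathcomp Require Import all_boot all_order all_algebra.
From mathcomp Require Import boolp classical_sets functions topology.
From mathcomp Require Import finmap.

Set Implicit Arguments.
Unset Strict Implicit.
Unset Printing Implicit Defensive.
Import GRing.Theory.
Local Open Scope classical_set_scope.
Local Open Scope ring_scope.

HB.structure Definition PTopZmod := {M of Topological M & GRing.Zmodule M}.

HB.mixin Record TopRing_cont R & Topological R & GRing.ComPzRing R := {
  topring_add_cont : continuous (fun p : R * R => p.1 + p.2);
  topring_opp_cont : continuous (fun x : R => - x);
  topring_mul_cont : continuous (fun p : R * R => p.1 * p.2) }.

HB.structure Definition TopComRing :=
  {R of PTopZmod R & GRing.ComPzRing R & TopRing_cont R}.

HB.mixin Record TopLmod_cont (R : TopComRing.type) M
    & Topological M & GRing.Lmodule R M := {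
  toplmod_add_cont : continuous (fun p : M * M => p.1 + p.2);
  toplmod_scale_cont : continuous (fun p : R * M => p.1 *: p.2) }.

HB.structure Definition TopLmod (R : TopComRing.type) :=
  {M of PTopZmod M & GRing.Lmodule R M & TopLmod_cont R M}.

Definition units_dense (R : TopComRing.type) : Prop :=
  closure [set u : R | exists v : R, u * v = 1] = setT.

Definition open_in {X : topologicalType} (S A : set X) : Prop :=
  exists O : set X, open O /\ A = O `&` S.

Definition locally_komega (X : topologicalType) : Prop :=
  hausdorff_space X /\
  forall x : X, exists W : set X, [/\ open W, W x &
    exists K : nat -> set X,
      [/\ (forall n, compact (K n)),
          (forall n, K n `<=` K n.+1),
          W = \bigcup_n K n &
          (forall A : set X, A `<=` W ->
             (forall n, open_in (K n) (A `&` K n)) -> open_in W A)]].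

(* C^1 maps over R (Bertram-Gloeckner-Neeb), on a subset V of a submodule S *)
(* of an ambient space X, with explicit module operations.                  *)

Section C1.
Variables (R : TopComRing.type) (X Y : topologicalType).
Variables (addX : X -> X -> X) (sclX : R -> X -> X).
Variables (subY : Y -> Y -> Y) (sclY : R -> Y -> Y).

Definition C1_dom (S V : set X) : set (X * X * R) :=
  [set z | V z.1.1 /\ S z.1.2 /\ V (addX z.1.1 (sclX z.2 z.1.2))].

Definition C1_witness (S V : set X) (g : X -> Y) (g1 : X * X * R -> Y) : Prop :=
  {within C1_dom S V, continuous g1} /\
  forall z, C1_dom S V z ->
    subY (g (addX z.1.1 (sclX z.2 z.1.2))) (g z.1.1) = sclY z.2 (g1 z).

Definition C1 (S V : set X) (g : X -> Y) : Prop :=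
  {within V, continuous g} /\ exists g1, C1_witness S V g g1.
End C1.

(* Grassmann algebras lambda^n = R[theta_0..theta_{n-1}], elements are       *)
(* coefficient families {set 'I_n} -> R (theta_I, I increasing).            *)

Section Grassmann.
Variable R : TopComRing.type.

Definition glam (n : nat) := {set 'I_n} -> R.

Definition gadd n (a b : glam n) : glam n := fun I => a I + b I.
Definition gscale n (t : R) (a : glam n) : glam n := fun I => t * a I.
Definition gone n : glam n := fun I => if I == finset.set0 then 1 else 0.
Definition gbasis n (I : {set 'I_n}) : glam n := fun J => if J == I then 1 else 0.

(* theta_I theta_J = gsign I J theta_{I u J} when I, J disjoint *)
Definition gsign n (I J : {set 'I_n}) : R :=
  (-1) ^+ #|finset (fun p : 'I_n * 'I_n =>
                    [&& p.1 \in I, p.2 \in J & (val p.2 < val p.1)%N])|.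

Definition gmul n (a b : glam n) : glam n := fun K =>
  \sum_(I : {set 'I_n}) \sum_(J : {set 'I_n})
     (if (I :&: J == finset.set0) && (I :|: J == K) then gsign I J * a I * b J else 0).

Definition geven n (a : glam n) : Prop := forall I : {set 'I_n}, odd #|I| -> a I = 0.
Definition godd n (a : glam n) : Prop := forall I : {set 'I_n}, ~~ odd #|I| -> a I = 0.

(* morphisms of the category Lambda: even unital R-algebra morphisms *)
Definition even_morph m n (phi : glam m -> glam n) : Prop :=
  [/\ (forall a b, phi (gadd a b) = gadd (phi a) (phi b)),
      (forall t a, phi (gscale t a) = gscale t (phi a)),
      phi (@gone m) = @gone n,
      (forall a b, phi (gmul a b) = gmul (phi a) (phi b)) &
      (forall a, geven a -> geven (phi a)) /\ (forall a, godd a -> godd (phi a))].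

Definition geps n : glam n -> glam 0 := fun a _ => a finset.set0.
End Grassmann.

(* The functor E-underline for E = E0 (+) E1.                               *)
(* E (x) lambda^n = prod_{I} E theta_I (product topology); its even part    *)
(* is the subset SEv n of the ambient space SE n.                           *)

Section Functor.
Variables (R : TopComRing.type) (E0 E1 : TopLmod.type R).

Definition SE (n : nat) := {ptws {set 'I_n} -> (E0 * E1)%type}.

Definition SEadd n (x y : SE n) : SE n := fun I => x I + y I.
Definition SEsub n (x y : SE n) : SE n := fun I => x I - y I.
Definition SEscale n (t : R) (x : SE n) : SE n := fun I => t *: x I.

Definition SEv n : set (SE n) :=
  [set x | forall I : {set 'I_n}, if odd #|I| then (x I).1 = 0 else (x I).2 = 0].

Definition SEv_theta n (p : 'I_n) : set (SE n) :=
  [set y | SEv y /\ forall I : {set 'I_n}, p \notin I -> y I = 0].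

Definition Emap m n (phi : glam R m -> glam R n) (x : SE m) : SE n :=
  fun J => \sum_(I : {set 'I_m}) phi (gbasis R I) J *: x I.

Definition open_subfunctor (U : forall n, set (SE n)) : Prop :=
  [/\ (forall n, U n `<=` @SEv n),
      (forall n, open_in (@SEv n) (U n)),
      (forall m n (phi : glam R m -> glam R n), even_morph phi ->
          forall x, U m x -> U n (Emap phi x)) &
      (forall n, U n = [set x | SEv x /\ U 0 (Emap (@geps R n) x)])].

Definition SEinf_carrier := {fset nat} -> (E0 * E1)%type.

Definition inj_fin N (x : SE N) : SEinf_carrier := fun J =>
  if all (fun j => (j < N)%N) J then x (finset (fun i : 'I_N => val i \in J)) else 0.

Definition dlim_open (A : set SEinf_carrier) : Prop :=
  forall N, open (@inj_fin N @^-1` A).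

Lemma dlim_openT : dlim_open setT.
Proof. by move=> N; rewrite preimage_setT; exact: openT. Qed.

Lemma dlim_openI : setI_closed dlim_open.
Proof. by move=> A B oA oB N; rewrite preimage_setI; apply: openI. Qed.

Lemma dlim_open_bigU (I : Type) (f : I -> set SEinf_carrier) :
  (forall i, dlim_open (f i)) -> dlim_open (\bigcup_i f i).
Proof.
by move=> ofi N; rewrite preimage_bigcup; apply: bigcup_open => i _; exact: ofi.
Qed.

(* E (x) lambda^infinity with the direct limit topology *)
Definition SEinf : Type := SEinf_carrier.
HB.instance Definition _ := Choice.on SEinf.
HB.instance Definition _ :=
  isOpenTopological.Build SEinf dlim_openT dlim_openI dlim_open_bigU.

Definition SEinf_add (x y : SEinf) : SEinf := fun I => x I + y I.
Definition SEinf_sub (x y : SEinf) : SEinf := fun I => x I - y I.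
Definition SEinf_scale (t : R) (x : SEinf) : SEinf := fun I => t *: x I.

Definition supported_below N (x : SEinf) : Prop :=
  forall J, x J <> 0 -> all (fun j => (j < N)%N) J.

Definition proj_fin N (x : SEinf) : SE N := fun I => x [fset val i | i in I]%fset.

Definition SEinf_v : set SEinf :=
  [set x | (exists N, supported_below N x) /\
           forall J, if odd #|` J| then (x J).1 = 0 else (x J).2 = 0].

Definition SEinf_theta (p : nat) : set SEinf :=
  [set y | SEinf_v y /\ forall J, p \notin J -> y J = 0].

Definition eps_inf (x : SEinf) : SE 0 := fun _ => x fset0.

Definition U_inf (U : forall n, set (SE n)) : set SEinf :=
  [set x | SEinf_v x /\ U 0 (eps_inf x)].

Definition bound_of (x : SEinf) : nat := xget 0%N [set N | supported_below N x].
End Functor.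

Arguments SEv {R E0 E1 n}.
Arguments SEinf_v {R E0 E1}.

Definition nat_trans (R : TopComRing.type) (E0 E1 F0 F1 : TopLmod.type R)
    (U : forall n, set (SE E0 E1 n)) (f : forall n, SE E0 E1 n -> SE F0 F1 n) :=
  [/\ (forall n x, U n x -> SEv (f n x)),
      (forall n, {within U n, continuous (f n)}) &
      (forall m n (phi : glam R m -> glam R n), even_morph phi ->
         forall x, U m x -> f n (@Emap R E0 E1 m n phi x) = @Emap R F0 F1 m n phi (f m x))].

(* f_infinity, defined by f_infinity|_{U(lambda^N)} = f_{lambda^N} *)
Definition f_inf (R : TopComRing.type) (E0 E1 F0 F1 : TopLmod.type R)
    (f : forall n, SE E0 E1 n -> SE F0 F1 n) (x : SEinf E0 E1) : SEinf F0 F1 :=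
  let N := bound_of x in inj_fin (f N (@proj_fin R E0 E1 N x)).

(* Rescaling theta_p |-> s theta_p is an even morphism, so by naturality the
   increment f(x + u y) - f(x) (y in E(lambda theta_p)) is concentrated on the
   theta_p-components and scales like theta_p.  The difference-quotient identity
   at the rescaled point (x_s, y, s u) then gives
     s (f(x + u y) - f(x)) = s u f^[1](x_s, y, s u),
   so for units s, u the value f^[1](x_s, y, s u) does not depend on s.  Since
   the units are dense and f^[1] is continuous, letting s and then u tend to 0
   through units yields f(x + u y) - f(x) = u df(x) y for every unit u, in
   particular for u = 1.
   At lambda^infinity all data live in some lambda^N: restricting f_infinity^[1]
   gives a difference quotient for f_(lambda^N), and the same density argument
   shows that f_infinity^[1](x, y, 0) is supported in lambda^N. *)

From HB Require Import structures.
From mathcomp Require Import all_boot all_order all_algebra.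
From mathcomp Require Import boolp classical_sets functions topology.
From mathcomp Require Import finmap mathcomp_extra.

Set Implicit Arguments.
Unset Strict Implicit.
Unset Printing Implicit Defensive.
Import GRing.Theory.
Local Open Scope classical_set_scope.
Local Open Scope ring_scope.

Lemma continuous_pair (T U V : topologicalType) (f : T -> U) (g : T -> V) :
  continuous f -> continuous g -> continuous (fun x => (f x, g x)).
Proof. by move=> cf cg x; apply: cvg_pair; [exact: cf|exact: cg]. Qed.

Lemma continuous_within_comp (X Y Z : topologicalType) (A : set X) (B : set Y)
    (k : X -> Y) (g : Y -> Z) :
  (forall x, A x -> B (k x)) -> continuous k -> {within B, continuous g} ->
  {within A, continuous (g \o k)}.
Proof.
move=> kAB ck /subspace_continuousP cg; apply/subspace_continuousP => x Ax P nP.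
have nkP : nbhs (k x) [set y | B y -> P (g y)] := cg _ (kAB _ Ax) _ nP.
have nkxP : nbhs x (k @^-1` [set y | B y -> P (g y)]) := ck x _ nkP.
change (nbhs x [set z | A z -> P (g (k z))]).
by apply: filterS nkxP => z Pz Az; exact/Pz/kAB.
Qed.

Lemma continuous_within_path (X Y Z : topologicalType) (A : set Y)
    (k : X -> Y) (g : Y -> Z) :
  (forall x, A (k x)) -> continuous k -> {within A, continuous g} ->
  continuous (g \o k).
Proof.
move=> kA ck cg; apply/continuous_subspace_setT.
exact: continuous_within_comp (fun x _ => kA x) ck cg.
Qed.

Lemma continuous_within_compr (X Y Z : topologicalType) (A : set X)
    (g : X -> Y) (q : Y -> Z) :
  {within A, continuous g} -> continuous q -> {within A, continuous (q \o g)}.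
Proof. by move=> cg cq x; apply: continuous_comp (cg x) (cq _). Qed.

Lemma cvg_ptws (I : eqType) (V : topologicalType) (T : Type) (F : set_system T)
    {FF : Filter F} (g : T -> prod_topology (fun _ : I => V))
    (h : prod_topology (fun _ : I => V)) :
  (forall i, (fun t => g t i) @ F --> h i) -> g @ F --> h.
Proof.
move=> gh; apply/cvg_sup => i; apply/cvg_image; first by apply/seteqP; split.
move=> B nB; exists [set k : {ptws I -> V} | B (k i)]; first exact: gh.
apply/seteqP; split => [v [k Bk <-]|v Bv] //.
by exists (@dfwith I (fun _ => V) h i v); rewrite /= dfwithin.
Qed.

Lemma units_dense_at0 (R : TopComRing.type) (Y : topologicalType) (h : R -> Y) c :
  hausdorff_space Y -> units_dense R -> {for 0, continuous h} ->
  (forall u v : R, u * v = 1 -> h u = c) -> h 0 = c.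
Proof.
move=> hY dR ch hc; apply: hY => A B nA nB.
have : closure [set u : R | exists v, u * v = 1] 0 by rewrite dR.
move=> /(_ _ (ch _ nA)) [u [[v uv] Au]].
by exists c; split; [rewrite -(hc u v uv)|exact: nbhs_singleton].
Qed.

Section ScalarContinuity.
Variable R : TopComRing.type.

Lemma mulr_continuousl (u : R) : continuous (fun s : R => s * u).
Proof.
move=> s; have cpair : continuous (fun t : R => (t, u)).
  by apply: continuous_pair => [t|]; [exact: cvg_id|exact: cst_continuous].
exact: continuous_comp (cpair s) (@topring_mul_cont R (s, u)).
Qed.

Lemma scaler_continuousl (M : TopLmod.type R) (e : M) :
  continuous (fun s : R => s *: e).
Proof.
move=> s; have cpair : continuous (fun t : R => (t, e)).
  by apply: continuous_pair => [t|]; [exact: cvg_id|exact: cst_continuous].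
exact: continuous_comp (cpair s) (@toplmod_scale_cont R M (s, e)).
Qed.

Lemma scaler_continuousl_pair (M N : TopLmod.type R) (e : M * N) :
  continuous (fun s : R => s *: e).
Proof.
case: e => a b; have -> : (fun s : R => s *: (a, b)) = (fun s => (s *: a, s *: b)) by [].
by apply: continuous_pair; exact: scaler_continuousl.
Qed.

End ScalarContinuity.

Definition natset n (I : {set 'I_n}) : {fset nat} := [fset val i | i in I]%fset.

Definition ordset n (X : {fset nat}) : {set 'I_n} := finset (fun i : 'I_n => val i \in X).

Definition bounded n (X : {fset nat}) : bool := all (fun j => (j < n)%N) X.

Lemma natsetP n (I : {set 'I_n}) j :
  reflect (exists2 i, i \in I & j = val i) (j \in natset I).
Proof. exact: imfsetP. Qed.

Lemma mem_natset n (I : {set 'I_n}) (i : 'I_n) : (val i \in natset I) = (i \in I).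
Proof. by apply/natsetP/idP => [[i' Ii' /val_inj ->]|Ii] //; exists i. Qed.

Lemma natsetK n : cancel (@natset n) (@ordset n).
Proof. by move=> I; apply/setP => i; rewrite inE mem_natset. Qed.

Lemma natset_inj n : injective (@natset n).
Proof. exact: can_inj (@natsetK n). Qed.

Lemma natset0 n : natset (finset.set0 : {set 'I_n}) = fset0.
Proof. by apply/fsetP => j; rewrite inE; apply/natsetP => -[i]; rewrite inE. Qed.

Lemma natsetU n (I J : {set 'I_n}) : natset (I :|: J) = (natset I `|` natset J)%fset.
Proof.
apply/fsetP => j; rewrite in_fsetU; apply/natsetP/orP.
  by case=> i; rewrite inE => /orP[] Ii ->; rewrite !mem_natset Ii; [left|right].
by case=> /natsetP[i Ii ->]; exists i; rewrite // inE Ii ?orbT.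
Qed.

Lemma natsetI n (I J : {set 'I_n}) : natset (I :&: J) = (natset I `&` natset J)%fset.
Proof.
apply/fsetP => j; rewrite in_fsetI; apply/natsetP/andP.
  by case=> i; rewrite inE => /andP[Ii Ji] ->; rewrite !mem_natset.
by case=> /natsetP[i Ii ->] Ji; exists i; rewrite // inE Ii -mem_natset Ji.
Qed.

Lemma card_natset n (I : {set 'I_n}) : #|` natset I| = #|I|.
Proof. by rewrite card_imfset /=; [rewrite cardE|exact: val_inj]. Qed.

Lemma natset_bounded n (I : {set 'I_n}) : bounded n (natset I).
Proof. by apply/allP => _ /natsetP[i _ ->]; exact: ltn_ord. Qed.

Lemma ordsetK n (X : {fset nat}) : bounded n X -> natset (ordset n X) = X.
Proof.
move=> /allP bX; apply/fsetP => j; apply/natsetP/idP => [[i]|Xj].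
  by rewrite inE => Xi ->.
by exists (Ordinal (bX _ Xj)); rewrite ?inE.
Qed.

Lemma bounded_natset n M (I : {set 'I_n}) :
  bounded M (natset I) = [forall i in I, (val i < M)%N].
Proof.
apply/allP/forall_inP => [bI i Ii|bI _ /natsetP[i Ii ->]]; last exact: bI.
by apply: bI; rewrite mem_natset.
Qed.

Lemma boundedU n (X Y : {fset nat}) :
  bounded n (X `|` Y)%fset = bounded n X && bounded n Y.
Proof.
apply/allP/andP => [bXY|[/allP bX /allP bY] j].
  by split; apply/allP => j Xj; apply: bXY; rewrite in_fsetU Xj ?orbT.
by rewrite in_fsetU => /orP[/bX|/bY].
Qed.

Lemma bounded0 n : bounded n fset0.
Proof. by apply/allP => j; rewrite inE. Qed.

Lemma sum_natset_eq n (V : nmodType) (X : {fset nat}) (F : {set 'I_n} -> V) :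
  \sum_(I : {set 'I_n}) (if natset I == X then F I else 0) =
  if bounded n X then F (ordset n X) else 0.
Proof.
case: ifP => bX.
  rewrite (bigD1 (ordset n X)) //= ordsetK // eqxx big1 ?addr0 // => I.
  by rewrite -(inj_eq (@natset_inj n)) ordsetK //; case: eqP.
rewrite big1 // => I _; case: eqP => // XI.
by move: bX; rewrite -XI natset_bounded.
Qed.

Section Rescale.
Variable R : TopComRing.type.

Definition rescale n (c : 'I_n -> R) (a : glam R n) : glam R n :=
  fun I => (\prod_(i in I) c i) * a I.

Lemma prod_setU_disjoint n (c : 'I_n -> R) (I J : {set 'I_n}) :
  I :&: J == finset.set0 ->
  \prod_(i in I :|: J) c i = (\prod_(i in I) c i) * \prod_(i in J) c i.
Proof.
rewrite setI_eq0 => dIJ; rewrite -bigU //.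
by apply: eq_bigl => i; rewrite !inE.
Qed.

Lemma rescale_even n (c : 'I_n -> R) : even_morph (rescale c).
Proof.
split.
- by move=> a b; apply: funext => I; rewrite /rescale /gadd mulrDr.
- by move=> t a; apply: funext => I; rewrite /rescale /gscale mulrCA.
- apply: funext => I; rewrite /rescale /gone.
  by case: eqP => [->|_]; rewrite ?big_set0 ?mulr1 ?mulr0.
- move=> a b; apply: funext => K; rewrite /rescale /gmul mulr_sumr.
  apply: eq_bigr => I _; rewrite mulr_sumr; apply: eq_bigr => J _.
  case: ifP => [/andP[dIJ /eqP <-]|_]; last by rewrite mulr0.
  by rewrite prod_setU_disjoint // mulrACA -!mulrA mulrCA !mulrA.
- by split=> a ha I oI; rewrite /rescale ha // mulr0.
Qed.

Definition theta_scale n (p : 'I_n) (s : R) : 'I_n -> R :=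
  fun i => if i == p then s else 1.

Lemma prod_theta_scale n (p : 'I_n) s (I : {set 'I_n}) :
  \prod_(i in I) theta_scale p s i = if p \in I then s else 1.
Proof.
case: ifP => pI; last first.
  rewrite big1 // => i Ii; rewrite /theta_scale.
  by case: eqP => // ip; rewrite -ip Ii in pI.
by rewrite (bigD1 p) //= /theta_scale eqxx big1 ?mulr1 // => i /andP[_ /negbTE ->].
Qed.

Definition cut_scale n M : 'I_n -> R := fun i => if (val i < M)%N then 1 else 0.

Lemma prod_cut_scale n M (I : {set 'I_n}) :
  \prod_(i in I) cut_scale M i = if bounded M (natset I) then 1 else 0.
Proof.
rewrite bounded_natset; case: forall_inP => [ltM|/forall_inP/forall_inPn[i Ii geM]].
  by rewrite big1 // => i Ii; rewrite /cut_scale ltM.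
by rewrite (bigD1 i) //= /cut_scale (negbTE geM) mul0r.
Qed.

End Rescale.

Definition cmul (R : pzSemiRingType) (T : finType) (c : T -> T -> T -> R)
  (a b : T -> R) : T -> R := fun k => \sum_i \sum_j c i j k * a i * b j.

Definition lmap (R : pzSemiRingType) (T S : finType) (D : T -> S -> R)
  (a : T -> R) : S -> R := fun k => \sum_i D i k * a i.

Section StructureConstants.
Variables (R : comPzRingType) (T S : finType).

Lemma lmap_cmul (cT : T -> T -> T -> R) (cS : S -> S -> S -> R) (D : T -> S -> R) :
  (forall i j k, \sum_l D l k * cT i j l = \sum_k1 \sum_k2 cS k1 k2 k * D i k1 * D j k2) ->
  forall a b, lmap D (cmul cT a b) = cmul cS (lmap D a) (lmap D b).
Proof.
move=> hc a b; apply: funext => k; rewrite /lmap /cmul.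
transitivity (\sum_(i : T) \sum_(j : T) \sum_(k1 : S) \sum_(k2 : S)
                cS k1 k2 k * (D i k1 * a i) * (D j k2 * b j)).
  under eq_bigr do rewrite big_distrr /=.
  rewrite exchange_big; apply: eq_bigr => i _.
  under eq_bigr do rewrite big_distrr /=.
  rewrite exchange_big; apply: eq_bigr => j _.
  under eq_bigr do rewrite !mulrA.
  rewrite -!big_distrl /= hc !big_distrl; apply: eq_bigr => k1 _.
  rewrite !big_distrl; apply: eq_bigr => k2 _ /=.
  by rewrite !mulrA [_ * D j k2 * a i]mulrAC.
have expand (c : R) (x y : T -> R) :
    c * (\sum_i x i) * (\sum_j y j) = \sum_i \sum_j c * x i * y j.
  rewrite -mulrA big_distrlr mulr_sumr; apply: eq_bigr => i _.
  by rewrite mulr_sumr; apply: eq_bigr => j _; rewrite mulrA.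
under [RHS]eq_bigr do under eq_bigr do rewrite expand.
under [RHS]eq_bigr do rewrite exchange_big /=.
rewrite [RHS]exchange_big; apply: eq_bigr => i _.
under [RHS]eq_bigr do rewrite exchange_big /=.
by rewrite [RHS]exchange_big.
Qed.

End StructureConstants.

Section Truncation.
Variable R : TopComRing.type.

Definition fsign (X Y : {fset nat}) : R :=
  (-1) ^+ #|` [fset q in X `*` Y | (q.2 < q.1)%N]%fset|.

Lemma gsign_natset n (I J : {set 'I_n}) : gsign R I J = fsign (natset I) (natset J).
Proof.
rewrite /gsign /fsign; congr (_ ^+ _); set P := finset _.
have -> : [fset q in natset I `*` natset J | (q.2 < q.1)%N]%fset =
          [fset (val p.1, val p.2) | p in P]%fset.
  apply/fsetP => -[j k]; rewrite !inE /=; apply/andP/imfsetP => /=.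
    case=> /andP[/natsetP[i1 Ii1 ->] /natsetP[i2 Ji2 ->]] lt21.
    by exists (i1, i2); rewrite // inE /= Ii1 Ji2.
  case=> -[i1 i2]; rewrite inE /= => /and3P[Ii1 Ji2 lt21] [-> ->].
  by rewrite !mem_natset Ii1 Ji2.
rewrite card_imfset /=; first by rewrite cardE.
by move=> [i1 i2] [j1 j2] [/val_inj -> /val_inj ->].
Qed.

Definition gcoef n (I J K : {set 'I_n}) : R :=
  if (I :&: J == finset.set0) && (I :|: J == K) then gsign R I J else 0.

Definition fcoef (X Y Z : {fset nat}) : R :=
  if (X `&` Y == fset0)%fset && (X `|` Y == Z)%fset then fsign X Y else 0.

Lemma gcoef_natset n (I J K : {set 'I_n}) :
  gcoef I J K = fcoef (natset I) (natset J) (natset K).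
Proof.
by rewrite /gcoef /fcoef -natsetI -natsetU -(natset0 n) !(inj_eq (@natset_inj n))
  gsign_natset.
Qed.

Lemma gmul_cmul n (a b : glam R n) : gmul a b = cmul (@gcoef n) a b.
Proof.
apply: funext => K; apply: eq_bigr => I _; apply: eq_bigr => J _.
by rewrite /gcoef; case: ifP; rewrite ?mul0r.
Qed.

Definition natset_eq n M (I : {set 'I_n}) (J : {set 'I_M}) : R :=
  if natset I == natset J then 1 else 0.

(* The morphism lambda^n -> lambda^M with theta_i |-> theta_i for i < M and
   theta_i |-> 0 for i >= M. *)
Definition gtrunc n M (a : glam R n) : glam R M :=
  fun J => if bounded n (natset J) then a (ordset n (natset J)) else 0.

Lemma gtrunc_lmap n M : @gtrunc n M = lmap (@natset_eq n M).
Proof.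
apply: funext => a; apply: funext => J; rewrite /gtrunc /lmap -sum_natset_eq.
by apply: eq_bigr => I _; rewrite /natset_eq; case: eqP; rewrite ?mul1r ?mul0r.
Qed.

Lemma mul_natset_eq n M (I : {set 'I_n}) (J : {set 'I_M}) r :
  natset_eq I J * r = if natset I == natset J then r else 0.
Proof. by rewrite /natset_eq; case: ifP; rewrite ?mul1r ?mul0r. Qed.

Lemma mulr_natset_eq n M (I : {set 'I_n}) (J : {set 'I_M}) r :
  r * natset_eq I J = if natset J == natset I then r else 0.
Proof. by rewrite /natset_eq eq_sym; case: ifP; rewrite ?mulr1 ?mulr0. Qed.

(* Both sides equal [fcoef X Y Z] when [X `|` Y = Z], the bounds being then
   automatic, and vanish otherwise. *)
Lemma gtrunc_coef n M (I J : {set 'I_n}) (K : {set 'I_M}) :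
  \sum_L natset_eq L K * gcoef I J L =
  \sum_K1 \sum_K2 gcoef K1 K2 K * natset_eq I K1 * natset_eq J K2.
Proof.
set X := natset I; set Y := natset J; set Z := natset K; set c := fcoef X Y Z.
transitivity (if bounded n Z then c else 0).
  rewrite (eq_bigr (fun L => if natset L == Z then c else 0)); first exact: sum_natset_eq.
  by move=> L _; rewrite mul_natset_eq gcoef_natset; case: eqP => // ->.
transitivity (if bounded M X then (if bounded M Y then c else 0) else 0); last first.
  symmetry; rewrite (eq_bigr (fun K1 => if natset K1 == X then
    (if bounded M Y then c else 0) else 0)); first exact: sum_natset_eq.
  move=> K1 _; case: eqP => [K1X|nK1X]; last first.
    rewrite big1 // => K2 _; rewrite !mulr_natset_eq.
    by move/eqP/negbTE: nK1X => ->; rewrite if_same.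
  rewrite (eq_bigr (fun K2 => if natset K2 == Y then c else 0)); first exact: sum_natset_eq.
  move=> K2 _; rewrite mulr_natset_eq mulr_natset_eq K1X eqxx gcoef_natset K1X.
  by case: eqP => // ->.
have [XYZ|nXYZ] := eqVneq (X `|` Y)%fset Z; last first.
  by rewrite /c /fcoef (negbTE nXYZ) andbF !if_same.
have := natset_bounded K; rewrite -/Z -XYZ !boundedU.
by rewrite /X /Y !natset_bounded => /andP[-> ->].
Qed.

Lemma gtrunc_even n M : even_morph (@gtrunc n M).
Proof.
split.
- by move=> a b; apply: funext => J; rewrite /gtrunc /gadd; case: ifP; rewrite ?addr0.
- by move=> t a; apply: funext => J; rewrite /gtrunc /gscale; case: ifP; rewrite ?mulr0.
- apply: funext => J; rewrite /gtrunc /gone; case: ifP => bJ.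
    by rewrite -(inj_eq (@natset_inj n)) -[J == _](inj_eq (@natset_inj M)) ordsetK
      ?natset0.
  by case: eqP => // J0; move: bJ; rewrite J0 natset0 bounded0.
- move=> a b; rewrite gtrunc_lmap !gmul_cmul; apply: lmap_cmul.
  exact: gtrunc_coef.
- split=> a ha J oJ; rewrite /gtrunc; case: ifP => // bJ; apply: ha;
  by rewrite -card_natset ordsetK // card_natset.
Qed.

End Truncation.

Section Functor.
Variables (R : TopComRing.type) (E0 E1 : TopLmod.type R).

Lemma Emap_rescale n (c : 'I_n -> R) (x : SE E0 E1 n) J :
  Emap (rescale c) x J = (\prod_(i in J) c i) *: x J.
Proof.
rewrite /Emap (bigD1 J) //= big1 ?addr0.
  by rewrite /rescale /gbasis eqxx mulr1.
by move=> I /negbTE nIJ; rewrite /rescale /gbasis eq_sym nIJ mulr0 scale0r.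
Qed.

Lemma Emap_geps n (x : SE E0 E1 n) J : Emap (@geps R n) x J = x finset.set0.
Proof.
rewrite /Emap (bigD1 finset.set0) //= big1 ?addr0.
  by rewrite /geps /gbasis eqxx scale1r.
by move=> I /negbTE nI0; rewrite /geps /gbasis eq_sym nI0 scale0r.
Qed.

Lemma Emap_gtrunc n M (z : SE E0 E1 n) (J : {set 'I_M}) :
  Emap (@gtrunc R n M) z J =
  if bounded n (natset J) then z (ordset n (natset J)) else 0.
Proof.
rewrite /Emap /gtrunc; case: ifP => bJ; last by rewrite big1 // => I _; rewrite scale0r.
rewrite (bigD1 (ordset n (natset J))) //= big1 ?addr0.
  by rewrite /gbasis eqxx scale1r.
by move=> I /negbTE nIJ; rewrite /gbasis eq_sym nIJ scale0r.
Qed.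

Lemma SEscale1 n (y : SE E0 E1 n) : SEscale 1 y = y.
Proof. by apply: funext => I; rewrite /SEscale scale1r. Qed.

Lemma SEv_addZ n (x y : SE E0 E1 n) t : SEv x -> SEv y -> SEv (SEadd x (SEscale t y)).
Proof.
move=> vx vy I; have := vx I; have := vy I.
by case: ifP => _ /= -> ->; rewrite scaler0 addr0.
Qed.

Section OpenSubfunctor.
Variables (U : forall n, set (SE E0 E1 n)).
Arguments U : clear implicits.
Hypothesis HU : open_subfunctor U.

Lemma open_subfunctor_Emap m n (phi : glam R m -> glam R n) (z : SE E0 E1 m) :
  even_morph phi -> U m z -> U n (Emap phi z).
Proof. by case: HU => _ _ HUmap _ phie Uz; exact: HUmap phie z Uz. Qed.

Lemma open_subfunctorP n (z : SE E0 E1 n) :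
  U n z <-> SEv z /\ U 0 (Emap (@geps R n) z).
Proof. by case: HU => _ _ _ UE; rewrite {1}UE. Qed.

Lemma open_subfunctor_body n (z z' : SE E0 E1 n) :
  U n z -> SEv z' -> z' finset.set0 = z finset.set0 -> U n z'.
Proof.
move=> /open_subfunctorP[_ Uz0] vz' z'z; apply/open_subfunctorP; split => //.
suff -> : Emap (@geps R n) z' = Emap (@geps R n) z by [].
by apply: funext => J; rewrite !Emap_geps.
Qed.

Lemma open_subfunctor_add_theta n (x y : SE E0 E1 n) (p : 'I_n) t :
  U n x -> SEv_theta p y -> U n (SEadd x (SEscale t y)).
Proof.
move=> Ux [vy yp]; have y0 : y finset.set0 = 0 by apply: yp; rewrite inE.
case: HU => subU _ _ _; apply: (open_subfunctor_body Ux).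
  exact: SEv_addZ (subU _ _ Ux) vy.
by rewrite /SEadd /SEscale y0 scaler0 addr0.
Qed.

End OpenSubfunctor.
End Functor.

Section FiniteLevel.
Variables (R : TopComRing.type) (E0 E1 F0 F1 : TopLmod.type R).
Variables (U : forall n, set (SE E0 E1 n)) (f : forall n, SE E0 E1 n -> SE F0 F1 n).
Arguments U : clear implicits.
Arguments f : clear implicits.
Hypotheses (HU : open_subfunctor U) (Hf : nat_trans U f).

Lemma nat_trans_rescale n (c : 'I_n -> R) (z : SE E0 E1 n) :
  U n z -> f n (Emap (rescale c) z) = Emap (rescale c) (f n z).
Proof. by case: Hf => _ _ Hnat Uz; apply: Hnat => //; exact: rescale_even. Qed.

Hypotheses (hF : hausdorff_space (F0 * F1)%type) (dR : units_dense R).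

Variables (n : nat) (g1 : SE E0 E1 n * SE E0 E1 n * R -> SE F0 F1 n).
Hypothesis W : C1_witness (@SEadd R E0 E1 n) (@SEscale R E0 E1 n) (@SEsub R F0 F1 n)
  (@SEscale R F0 F1 n) (@SEv R E0 E1 n) (U n) (f n) g1.
Variables (x : SE E0 E1 n) (p : 'I_n) (y : SE E0 E1 n).
Hypotheses (Ux : U n x) (Yy : SEv_theta p y).

Let xs s := Emap (rescale (theta_scale p s)) x.

Lemma rescale_add_theta s u :
  Emap (rescale (theta_scale p s)) (SEadd x (SEscale u y)) =
  SEadd (xs s) (SEscale (s * u) y).
Proof.
apply: funext => I; rewrite /SEadd /SEscale /xs !Emap_rescale prod_theta_scale.
case: ifP => pI; first by rewrite scalerDr scalerA.
by case: Yy => _ ->; rewrite ?pI // !scaler0 !addr0 scale1r.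
Qed.

Lemma U_add_theta u : U n (SEadd x (SEscale u y)).
Proof. exact: open_subfunctor_add_theta Ux Yy. Qed.

Lemma f_add_theta_off u (I : {set 'I_n}) :
  p \notin I -> f n (SEadd x (SEscale u y)) I = f n x I.
Proof.
move=> pI; have := nat_trans_rescale (theta_scale p 0) (U_add_theta u).
rewrite rescale_add_theta mul0r.
have -> : SEadd (xs 0) (SEscale 0 y) = xs 0.
  by apply: funext => J; rewrite /SEadd /SEscale scale0r addr0.
rewrite /xs nat_trans_rescale // => /(congr1 (fun z => z I)).
by rewrite !Emap_rescale prod_theta_scale (negbTE pI) !scale1r.
Qed.

Lemma C1_dom_theta s u :
  C1_dom (@SEadd R E0 E1 n) (@SEscale R E0 E1 n) (@SEv R E0 E1 n) (U n)
    (xs s, y, s * u).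
Proof.
split; first exact: open_subfunctor_Emap (rescale_even _) Ux.
split; first by case: Yy.
rewrite /= -rescale_add_theta.
exact: open_subfunctor_Emap (rescale_even _) (U_add_theta u).
Qed.

Lemma increment_scale s u (I : {set 'I_n}) :
  s *: (f n (SEadd x (SEscale u y)) I - f n x I) = (s * u) *: g1 (xs s, y, s * u) I.
Proof.
case: W => _ Wid; have := congr1 (fun z => z I) (Wid _ (C1_dom_theta s u)).
rewrite /= /SEsub /SEscale -rescale_add_theta /xs !nat_trans_rescale //;
  last exact: U_add_theta.
rewrite !Emap_rescale prod_theta_scale => <-; case: ifP => pI; first by rewrite scalerBr.
by rewrite f_add_theta_off ?pI // !subrr !scaler0.
Qed.

Lemma rescale_theta_continuous : continuous xs.
Proof.
have -> : xs = fun s I => (if p \in I then s else 1) *: x I.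
  by apply: funext => s; apply: funext => I; rewrite /xs Emap_rescale prod_theta_scale.
move=> s; apply: cvg_ptws => I; case: ifP => _; first exact: scaler_continuousl_pair.
exact: cvg_cst.
Qed.

Lemma g1_path_continuous (k : R -> SE E0 E1 n * SE E0 E1 n * R) (I : {set 'I_n}) :
  (forall s, C1_dom (@SEadd R E0 E1 n) (@SEscale R E0 E1 n) (@SEv R E0 E1 n)
     (U n) (k s)) ->
  continuous k -> continuous (fun s => g1 (k s) I).
Proof.
move=> kdom ck s; case: W => cg1 _.
apply: (continuous_comp (f := g1 \o k) (g := fun h : SE F0 F1 n => h I)).
  exact: continuous_within_path kdom ck cg1 s.
exact: proj_continuous.
Qed.

Lemma increment_units u w (I : {set 'I_n}) : u * w = 1 ->
  w *: (f n (SEadd x (SEscale u y)) I - f n x I) = g1 (xs 0, y, 0) I.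
Proof.
move=> uw; symmetry; set D := _ - _.
have := units_dense_at0 (h := fun s => g1 (xs s, y, s * u) I) (c := w *: D) hF dR.
rewrite /= mul0r; apply.
  apply: g1_path_continuous => [s|]; first exact: C1_dom_theta.
  apply: continuous_pair; last exact: mulr_continuousl.
  by apply: continuous_pair; [exact: rescale_theta_continuous|exact: cst_continuous].
move=> s v sv; have vwsu : (v * w) * (s * u) = 1.
  by rewrite mulrACA [v * s]mulrC sv [w * u]mulrC uw mulr1.
rewrite -[LHS]scale1r -vwsu -scalerA -increment_scale scalerA.
by congr (_ *: _); rewrite mulrAC [v * s]mulrC sv mul1r.
Qed.

Lemma g1_at0 (I : {set 'I_n}) : g1 (x, y, 0) I = g1 (xs 0, y, 0) I.
Proof.
apply: (units_dense_at0 (h := fun u => g1 (x, y, u) I)) hF dR _ _.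
  apply: g1_path_continuous => [u|].
    by split; [|split; [case: Yy|exact: U_add_theta]].
  by apply: continuous_pair => [|u]; [exact: cst_continuous|exact: cvg_id].
move=> u w uw; rewrite -(increment_units I uw).
have x1 : xs 1 = x.
  by apply: funext => J; rewrite /xs Emap_rescale prod_theta_scale if_same scale1r.
rewrite -[in RHS](scale1r (_ - _)) increment_scale !mul1r x1.
by rewrite scalerA mulrC uw scale1r.
Qed.

Theorem nat_trans_add_theta : f n (SEadd x y) = SEadd (f n x) (g1 (x, y, 0)).
Proof.
apply: funext => I; have := increment_units I (mulr1 1).
by rewrite scale1r -g1_at0 SEscale1 /SEadd => <-; rewrite addrC subrK.
Qed.

End FiniteLevel.

Section DirectLimit.
Variables (R : TopComRing.type) (E0 E1 : TopLmod.type R).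

Lemma inj_finE n (z : SE E0 E1 n) J :
  inj_fin z J = if bounded n J then z (ordset n J) else 0.
Proof. by []. Qed.

Lemma inj_fin_natset n (z : SE E0 E1 n) (I : {set 'I_n}) : inj_fin z (natset I) = z I.
Proof. by rewrite inj_finE natset_bounded natsetK. Qed.

Lemma proj_inj_fin n M (z : SE E0 E1 n) :
  proj_fin (N := M) (inj_fin z) = Emap (@gtrunc R n M) z.
Proof. by apply: funext => J; rewrite Emap_gtrunc. Qed.

Lemma inj_proj_finK N (x : SEinf E0 E1) :
  supported_below N x -> inj_fin (proj_fin (N := N) x) = x.
Proof.
move=> xN; apply: funext => J; rewrite inj_finE; case: ifP => bJ.
  by rewrite /proj_fin -/(natset _) ordsetK.
by apply/esym/eqP; apply: contraFT bJ => /eqP /xN.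
Qed.

Lemma inj_finD n (a b : SE E0 E1 n) :
  inj_fin (SEadd a b) = SEinf_add (inj_fin a) (inj_fin b).
Proof.
by apply: funext => J; rewrite /SEinf_add !inj_finE; case: ifP; rewrite ?addr0.
Qed.

Lemma inj_finZ n t (b : SE E0 E1 n) :
  inj_fin (SEscale t b) = SEinf_scale t (inj_fin b).
Proof.
by apply: funext => J; rewrite /SEinf_scale !inj_finE; case: ifP; rewrite ?scaler0.
Qed.

Lemma supported_below_inj n (z : SE E0 E1 n) : supported_below n (inj_fin z).
Proof. by move=> J; rewrite inj_finE; case: ifP. Qed.

Lemma supported_belowW a b (x : SEinf E0 E1) :
  (a <= b)%N -> supported_below a x -> supported_below b x.
Proof.
by move=> ab xa J /xa /allP aJ; apply/allP => j /aJ /leq_trans; apply.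
Qed.

Lemma SEv_inj n (z : SE E0 E1 n) : SEv z -> SEinf_v (inj_fin z).
Proof.
move=> vz; split; first by exists n; exact: supported_below_inj.
move=> J; rewrite inj_finE; case bJ: (bounded n J); last by case: ifP.
by have := vz (ordset n J); rewrite -card_natset ordsetK.
Qed.

Lemma SEv_proj N (x : SEinf E0 E1) : SEinf_v x -> SEv (proj_fin (N := N) x).
Proof. by case=> _ vx I; rewrite /proj_fin -/(natset I) -card_natset; exact: vx. Qed.

Lemma eval_continuous (J : {fset nat}) : continuous (fun x : SEinf E0 E1 => x J).
Proof.
apply/continuousP => O oO.
change (dlim_open ((fun x : SEinf E0 E1 => x J) @^-1` O)) => N.
rewrite /preimage /=; under eq_set do rewrite inj_finE.
case: (bounded N J).
  have := @proj_continuous _ (fun _ : {set 'I_N} => (E0 * E1)%type) (ordset N J).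
  by move=> cproj; exact: ((@continuousP (SE E0 E1 N) _ _).1 cproj O oO).
have [O0|nO0] := pselect (O 0).
  by rewrite (_ : [set _ | _] = setT); [exact: openT|apply/seteqP; split].
by rewrite (_ : [set _ | _] = set0); [exact: open0|apply/seteqP; split].
Qed.

Lemma inj_fin_continuous n :
  continuous (@inj_fin R E0 E1 n : SE E0 E1 n -> SEinf E0 E1).
Proof. by apply/continuousP => A oA; exact: oA n. Qed.

Lemma proj_fin_continuous n :
  continuous (@proj_fin R E0 E1 n : SEinf E0 E1 -> SE E0 E1 n).
Proof.
move=> x; apply: (cvg_ptws (FF := @nbhs_filter (SEinf E0 E1) x)) => I.
exact: eval_continuous.
Qed.

End DirectLimit.

Section InfiniteLevel.
Variables (R : TopComRing.type) (E0 E1 F0 F1 : TopLmod.type R).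
Variables (U : forall n, set (SE E0 E1 n)) (f : forall n, SE E0 E1 n -> SE F0 F1 n).
Arguments U : clear implicits.
Arguments f : clear implicits.
Hypotheses (HU : open_subfunctor U) (Hf : nat_trans U f).

Lemma U_inf_inj n (z : SE E0 E1 n) : U n z -> U_inf U (inj_fin z).
Proof.
move=> /(open_subfunctorP HU)[vz Uz0]; split; first exact: SEv_inj.
suff -> : eps_inf (inj_fin z) = Emap (@geps R n) z by [].
by apply: funext => J; rewrite /eps_inf Emap_geps -(natset0 n) inj_fin_natset.
Qed.

Lemma U_proj N (x : SEinf E0 E1) : U_inf U x -> U N (proj_fin (N := N) x).
Proof.
case=> vx Ux0; apply/(open_subfunctorP HU); split; first exact: SEv_proj.
suff -> : Emap (@geps R N) (proj_fin (N := N) x) = eps_inf x by [].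
by apply: funext => J; rewrite Emap_geps /proj_fin /eps_inf -/(natset _) natset0.
Qed.

Lemma nat_trans_supported n M (z : SE E0 E1 n) :
  U n z -> (forall I, ~~ bounded M (natset I) -> z I = 0) ->
  forall I, ~~ bounded M (natset I) -> f n z I = 0.
Proof.
move=> Uz zM I nbI.
have cutz : Emap (rescale (@cut_scale R n M)) z = z.
  apply: funext => J; rewrite Emap_rescale prod_cut_scale.
  by case: ifP => bJ; rewrite ?scale1r // zM ?bJ // scaler0.
have := nat_trans_rescale Hf (@cut_scale R n M) Uz; rewrite cutz => ->.
by rewrite Emap_rescale prod_cut_scale (negbTE nbI) scale0r.
Qed.

Lemma f_inf_inj n (z : SE E0 E1 n) : U n z -> f_inf f (inj_fin z) = inj_fin (f n z).
Proof.
(* [bound_of] picks an arbitrary bound [M], possibly smaller than [n]; the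
   truncation lambda^n -> lambda^M and [nat_trans_supported] reconcile both. *)
move=> Uz; rewrite /f_inf; set M := bound_of _.
have zbound : exists N, supported_below N (inj_fin z).
  by exists n; exact: supported_below_inj.
have zM : supported_below M (inj_fin z) := xgetPex 0%N zbound.
case: Hf => _ _ Hnat; rewrite proj_inj_fin Hnat //; last exact: gtrunc_even.
apply: funext => J; rewrite !inj_finE Emap_gtrunc.
case: (boolP (bounded M J)) => bMJ; first by rewrite ordsetK.
case: ifP => // bnJ; symmetry; apply: (nat_trans_supported (M := M) Uz).
  move=> I nbI; apply/eqP; apply: contraR nbI => zI.
  by apply: (zM (natset I)); rewrite inj_fin_natset; exact/eqP.
by rewrite ordsetK.
Qed.

Lemma C1_dom_inj n (w : SE E0 E1 n * SE E0 E1 n * R) :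
  C1_dom (@SEadd R E0 E1 n) (@SEscale R E0 E1 n) (@SEv R E0 E1 n) (U n) w ->
  C1_dom (@SEinf_add R E0 E1) (@SEinf_scale R E0 E1) (@SEinf_v R E0 E1) (U_inf U)
    (inj_fin w.1.1, inj_fin w.1.2, w.2).
Proof.
case: w => -[a b] t [/= Ua [vb Uab]]; split; first exact: U_inf_inj.
split; first exact: SEv_inj.
by rewrite /= -inj_finZ -inj_finD; exact: U_inf_inj.
Qed.

Lemma C1_witness_fin (g1 : SEinf E0 E1 * SEinf E0 E1 * R -> SEinf F0 F1) :
  C1_witness (@SEinf_add R E0 E1) (@SEinf_scale R E0 E1) (@SEinf_sub R F0 F1)
    (@SEinf_scale R F0 F1) (@SEinf_v R E0 E1) (U_inf U) (f_inf f) g1 ->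
  forall n, C1_witness (@SEadd R E0 E1 n) (@SEscale R E0 E1 n) (@SEsub R F0 F1 n)
    (@SEscale R F0 F1 n) (@SEv R E0 E1 n) (U n) (f n)
    (fun w => proj_fin (N := n) (g1 (inj_fin w.1.1, inj_fin w.1.2, w.2))).
Proof.
move=> [cg1 g1E] n; split.
  pose k (w : SE E0 E1 n * SE E0 E1 n * R) : SEinf E0 E1 * SEinf E0 E1 * R :=
    (inj_fin w.1.1, inj_fin w.1.2, w.2).
  have ck : continuous k.
    apply: continuous_pair; last by move=> w; exact: cvg_snd.
    have cinj := @inj_fin_continuous R E0 E1 n.
    apply: continuous_pair => w.
      apply: (continuous_comp (f := fun w : SE E0 E1 n * SE E0 E1 n * R => w.1.1)).
        by apply: (continuous_comp (f := fst) (g := fst)); exact: cvg_fst.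
      exact: cinj.
    apply: (continuous_comp (f := fun w : SE E0 E1 n * SE E0 E1 n * R => w.1.2)).
      by apply: (continuous_comp (f := fst) (g := snd)); [exact: cvg_fst|exact: cvg_snd].
    exact: cinj.
  have := continuous_within_comp (@C1_dom_inj n) ck cg1.
  by move/continuous_within_compr; apply; exact: proj_fin_continuous.
move=> -[[a b] t] dw; have [/= Ua [_ Uab]] := dw.
have := g1E _ (C1_dom_inj dw); rewrite /= -inj_finZ -inj_finD !f_inf_inj // => e; apply: funext => I.
by have := congr1 (fun h => h (natset I)) e; rewrite /SEinf_sub /SEinf_scale !inj_fin_natset.
Qed.

Lemma finite_level_theta (x : SEinf E0 E1) p (y : SEinf E0 E1) :
  U_inf U x -> SEinf_theta p y ->
  exists N (p' : 'I_N) (x' y' : SE E0 E1 N),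
    [/\ inj_fin x' = x, inj_fin y' = y, U N x' & SEv_theta p' y'].
Proof.
move=> Ux [vy yp]; have [[Nx xNx] _] := Ux.1; have [[Ny yNy] _] := vy.
pose N := maxn (maxn Nx Ny) p.+1.
have pN : (p < N)%N by rewrite leq_max leqnn orbT.
exists N, (Ordinal pN), (proj_fin (N := N) x), (proj_fin (N := N) y); split.
- by apply: inj_proj_finK; apply: supported_belowW xNx; rewrite !leq_max leqnn.
- by apply: inj_proj_finK; apply: supported_belowW yNy; rewrite !leq_max leqnn orbT.
- exact: U_proj.
split; first exact: SEv_proj.
by move=> I pI; apply: yp; rewrite -[p]/(val (Ordinal pN)) mem_natset.
Qed.

Hypotheses (hF : hausdorff_space (F0 * F1)%type) (dR : units_dense R).
Variable g1 : SEinf E0 E1 * SEinf E0 E1 * R -> SEinf F0 F1.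
Hypothesis W : C1_witness (@SEinf_add R E0 E1) (@SEinf_scale R E0 E1)
  (@SEinf_sub R F0 F1) (@SEinf_scale R F0 F1) (@SEinf_v R E0 E1) (U_inf U) (f_inf f) g1.

Lemma g1_inf_supported N (p : 'I_N) (x y : SE E0 E1 N) :
  U N x -> SEv_theta p y -> supported_below N (g1 (inj_fin x, inj_fin y, 0)).
Proof.
move=> Ux Yy J; case bJ: (bounded N J) => // -[]; case: W => cg1 g1E.
have Uxty t : U N (SEadd x (SEscale t y)) := open_subfunctor_add_theta HU t Ux Yy.
pose k (t : R) : SEinf E0 E1 * SEinf E0 E1 * R := (inj_fin x, inj_fin y, t).
have dom t : C1_dom (@SEinf_add R E0 E1) (@SEinf_scale R E0 E1) (@SEinf_v R E0 E1)
    (U_inf U) (k t).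
  apply: (C1_dom_inj (w := (x, y, t))); split => //=; split; first by case: Yy.
  exact: Uxty.
apply: (units_dense_at0 (h := fun t => g1 (k t) J)) hF dR _ _.
  apply: (continuous_comp (f := g1 \o k) (g := fun h : SEinf F0 F1 => h J)).
    apply: continuous_within_path dom _ cg1 0.
    by apply: continuous_pair => [|t]; [exact: cst_continuous|exact: cvg_id].
  exact: eval_continuous.
move=> t v tv; have := congr1 (fun h => h J) (g1E _ (dom t)).
rewrite /= -inj_finZ -inj_finD !f_inf_inj //.
rewrite /SEinf_sub /SEinf_scale !inj_finE bJ subr0 => /esym t_g1.
by rewrite -[LHS]scale1r -tv mulrC -scalerA t_g1 scaler0.
Qed.

Theorem f_inf_add_theta (x : SEinf E0 E1) p (y : SEinf E0 E1) :
  U_inf U x -> SEinf_theta p y ->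
  f_inf f (SEinf_add x y) = SEinf_add (f_inf f x) (g1 (x, y, 0)).
Proof.
move=> Ux Yy; have [N [p' [x' [y' [<- <- Ux' Yy']]]]] := finite_level_theta Ux Yy.
have Ux'y' : U N (SEadd x' y').
  by have := open_subfunctor_add_theta HU 1 Ux' Yy'; rewrite SEscale1.
have := nat_trans_add_theta HU Hf hF dR (C1_witness_fin W N) Ux' Yy'.
rewrite -inj_finD !f_inf_inj // => ->.
by rewrite inj_finD inj_proj_finK //; exact: g1_inf_supported Ux' Yy'.
Qed.

End InfiniteLevel.

Theorem proposition2p16 (R : TopComRing.type) (E0 E1 F0 F1 : TopLmod.type R)
  (U : forall n : nat, set (SE E0 E1 n))
  (f : forall n : nat, SE E0 E1 n -> SE F0 F1 n) :
  hausdorff_space R -> units_dense R ->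
  hausdorff_space (E0 * E1)%type -> hausdorff_space (F0 * F1)%type ->
  open_subfunctor U -> nat_trans U f ->
  ((forall n : nat,
      C1 (@SEadd R E0 E1 n) (@SEscale R E0 E1 n) (@SEsub R F0 F1 n)
         (@SEscale R F0 F1 n) (@SEv R E0 E1 n) (U n) (f n)) ->
   forall (n : nat) (g1 : SE E0 E1 n * SE E0 E1 n * R -> SE F0 F1 n),
     C1_witness (@SEadd R E0 E1 n) (@SEscale R E0 E1 n) (@SEsub R F0 F1 n)
       (@SEscale R F0 F1 n) (@SEv R E0 E1 n) (U n) (f n) g1 ->
     forall x : SE E0 E1 n, U n x ->
     forall (p : 'I_n) (y : SE E0 E1 n), SEv_theta p y ->
       f n (SEadd x y) = SEadd (f n x) (g1 (x, y, 0)))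
  /\
  (locally_komega R -> locally_komega (E0 * E1)%type ->
   locally_komega (F0 * F1)%type ->
   C1 (@SEinf_add R E0 E1) (@SEinf_scale R E0 E1) (@SEinf_sub R F0 F1)
      (@SEinf_scale R F0 F1) (@SEinf_v R E0 E1) (U_inf U) (f_inf f) ->
   (forall n : nat,
      C1 (@SEadd R E0 E1 n) (@SEscale R E0 E1 n) (@SEsub R F0 F1 n)
         (@SEscale R F0 F1 n) (@SEv R E0 E1 n) (U n) (f n) /\
      forall g1 : SE E0 E1 n * SE E0 E1 n * R -> SE F0 F1 n,
      C1_witness (@SEadd R E0 E1 n) (@SEscale R E0 E1 n) (@SEsub R F0 F1 n)
        (@SEscale R F0 F1 n) (@SEv R E0 E1 n) (U n) (f n) g1 ->
      forall x : SE E0 E1 n, U n x ->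
      forall (p : 'I_n) (y : SE E0 E1 n), SEv_theta p y ->
        f n (SEadd x y) = SEadd (f n x) (g1 (x, y, 0)))
   /\
   (forall g1 : SEinf E0 E1 * SEinf E0 E1 * R -> SEinf F0 F1,
      C1_witness (@SEinf_add R E0 E1) (@SEinf_scale R E0 E1) (@SEinf_sub R F0 F1)
        (@SEinf_scale R F0 F1) (@SEinf_v R E0 E1) (U_inf U) (f_inf f) g1 ->
      forall x : SEinf E0 E1, U_inf U x ->
      forall (p : nat) (y : SEinf E0 E1), SEinf_theta p y ->
        f_inf f (SEinf_add x y) = SEinf_add (f_inf f x) (g1 (x, y, 0)))).
Proof.
move=> _ dR _ hF HU Hf; split.
  move=> _ n g1 W x Ux p y Yy; exact (nat_trans_add_theta HU Hf hF dR W Ux Yy).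
move=> _ _ _ [_ [g1 W]]; split; last first.
  move=> g1' W' x Ux p y Yy; exact (f_inf_add_theta HU Hf hF dR W' Ux Yy).
move=> n; split.
  split; first by case: Hf.
  by eexists; exact (C1_witness_fin HU Hf W n).
move=> g1' W' x Ux p y Yy; exact (nat_trans_add_theta HU Hf hF dR W' Ux Yy).
Qed.
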